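(* Let $\Sigma_{\mathrm{D}}=(\mathcal{S}_{\mathrm{D}},\mathcal{A}_{\mathrm{D}},\Delta,\overline{g},\underline{g})$ be a finite nondeterministic transition system as in the context and let $\gamma\in(0,1)$. Then there exist deterministic maximally and minimally optimal policies for $\Sigma_{\mathrm{D}}$; in particular they are given by $$\overline{\pi}^\star(s)=\arg\max_{a}\ \overline{q}^\star(s,a),\qquad \underline{\pi}^\star(s)=\arg\max_{a}\ \underline{q}^\star(s,a),$$ that is, $\overline{v}_{\overline{\pi}^\star}=\overline{v}^\star$ and $\underline{v}_{\underline{\pi}^\star}=\underline{v}^\star$.
   Context: $\mathcal{S}_{\mathrm{D}},\mathcal{A}_{\mathrm{D}}$ are finite; $\mathcal{A}_{\mathrm{D}}(s)\subseteq\mathcal{A}_{\mathrm{D}}$ are nonempty sets of enabled inputs and the maxima over $a$ are over $\mathcal{A}_{\mathrm{D}}(s)$; for $a\in\mathcal{A}_{\mathrm{D}}(s)$, $\Delta(s,a)\subseteq\mathcal{S}_{\mathrm{D}}$ is nonempty; $\overline{g},\underline{g}:\mathcal{S}_{\mathrm{D}}\times\mathcal{A}_{\mathrm{D}}\to\mathbb{R}$. A policy is a map $\pi$ with $\pi(s)\in\mathcal{A}_{\mathrm{D}}(s)$. For runs $s_0,s_1,\dots$ with actions $a_i\in\mathcal{A}_{\mathrm{D}}(s_i)$ and $s_{i+1}\in\Delta(s_i,a_i)$, the maximal return is $\sum_{i\ge0}\gamma^i\overline{g}(s_i,a_i)$ and the minimal return $\sum_{i\ge0}\gamma^i\underline{g}(s_i,a_i)$.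 $\overline{v}_\pi(s)$ (resp. $\underline{v}_\pi(s)$): maximum of maximal return (resp. minimum of minimal return) over runs from $s$ with $a_i=\pi(s_i)$. $\overline{q}_\pi(s,a)$ (resp. $\underline{q}_\pi(s,a)$): same but with $a_0=a$ and $a_i=\pi(s_i)$ for $i\ge1$. Optimal functions: $\overline{v}^\star=\max_\pi\overline{v}_\pi$, $\underline{v}^\star=\max_\pi\underline{v}_\pi$, $\overline{q}^\star=\max_\pi\overline{q}_\pi$, $\underline{q}^\star=\max_\pi\underline{q}_\pi$ (pointwise). A policy $\pi$ is maximally (resp. minimally) optimal if $\overline{v}_\pi=\overline{v}^\star$ (resp. $\underline{v}_\pi=\underline{v}^\star$). *)

From HB Require Import structures.
From mathcomp Require Import all_boot all_order all_algebra.
From mathcomp Require Import all_classical all_reals all_analysis.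
Set Implicit Arguments. Unset Strict Implicit. Unset Printing Implicit Defensive.
Import Order.TTheory GRing.Theory Num.Theory.
Local Open Scope classical_set_scope.
Local Open Scope ring_scope.

Section NDTS.
Variables (R : realType) (S A : finType).
(* en s = enabled inputs A_D(s); Delta s a = successor set; gamma discount *)
Variables (en : S -> {set A}) (Delta : S -> A -> {set S}) (gamma : R).

Definition is_policy (pi : S -> A) : Prop := forall s, pi s \in en s.

Definition is_run (s : nat -> S) (a : nat -> A) : Prop :=
  forall i, a i \in en (s i) /\ s i.+1 \in Delta (s i) (a i).

Definition disc_return (g : S -> A -> R) (s : nat -> S) (a : nat -> A) : R :=
  limn (fun n => \sum_(i < n) gamma ^+ i * g (s i) (a i)).

Definition v_returns (g : S -> A -> R) (pi : S -> A) (s0 : S) : set R :=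
  [set r | exists s a, [/\ is_run s a, s 0%N = s0,
     (forall i, a i = pi (s i)) & r = disc_return g s a]].

Definition q_returns (g : S -> A -> R) (pi : S -> A) (s0 : S) (a0 : A) : set R :=
  [set r | exists s a, [/\ is_run s a, s 0%N = s0, a 0%N = a0,
     (forall i, (0 < i)%N -> a i = pi (s i)) & r = disc_return g s a]].

Definition vmax (gb : S -> A -> R) pi s0 : R := sup (v_returns gb pi s0).
Definition vmin (gu : S -> A -> R) pi s0 : R := inf (v_returns gu pi s0).
Definition qmax (gb : S -> A -> R) pi s0 a0 : R := sup (q_returns gb pi s0 a0).
Definition qmin (gu : S -> A -> R) pi s0 a0 : R := inf (q_returns gu pi s0 a0).

Definition vmax_star gb s0 : R := sup [set vmax gb pi s0 | pi in is_policy].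
Definition vmin_star gu s0 : R := sup [set vmin gu pi s0 | pi in is_policy].
Definition qmax_star gb s0 a0 : R := sup [set qmax gb pi s0 a0 | pi in is_policy].
Definition qmin_star gu s0 a0 : R := sup [set qmin gu pi s0 a0 | pi in is_policy].

Definition max_optimal gb pi : Prop := forall s, vmax gb pi s = vmax_star gb s.
Definition min_optimal gu pi : Prop := forall s, vmin gu pi s = vmin_star gu s.

Definition greedy (q : S -> A -> R) (pi : S -> A) : Prop :=
  forall s, pi s \in en s /\ (forall a, a \in en s -> q s a <= q s (pi s)).
End NDTS.

(* Both halves come from one Bellman equation
     V s = max_{a enabled at s} (g s a + gamma * ext_{t in Delta s a} V t),
   where ext is max for the maximal return (the nondeterminism cooperates with
   the controller) and min for the minimal return (it plays against it).  The
   right-hand side is a gamma-contraction in the sup norm, so Banach's theorem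
   gives a solution V; write Q s a for the bracket.  Telescoping
   gamma^i (g_i + gamma Q_{i+1} - Q_i) along a run compares its discounted
   return with Q: the run taking extremal successors has return at most Q s a,
   with equality when the policy is Q-greedy, and every run the nondeterminism
   allows lies on the right side of Q.  So q_pi <= Q for all policies, with
   equality for Q-greedy ones; hence q* = Q and Q-greedy, equivalently
   q*-greedy, policies are optimal. *)

From HB Require Import structures.
From mathcomp Require Import all_boot all_order all_algebra.
From mathcomp Require Import all_classical all_reals all_analysis.
From mathcomp Require Import lra ring.
Set Implicit Arguments. Unset Strict Implicit. Unset Printing Implicit Defensive.
Import Order.TTheory GRing.Theory Num.Theory numFieldNormedType.Exports.
Local Open Scope classical_set_scope.
Local Open Scope ring_scope.

Section DiscountedSum.
Variables (R : realType) (gamma : R).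
Hypotheses (gamma_ge0 : 0 <= gamma) (gamma_lt1 : gamma < 1).

Lemma discounted_sum_cvg (r : R^nat) M : (forall i, `|r i| <= M) ->
  cvgn (fun n => \sum_(i < n) gamma ^+ i * r i).
Proof.
move=> rM; have -> : (fun n => \sum_(i < n) gamma ^+ i * r i) =
    series (fun i => gamma ^+ i * r i).
  by apply/funext => n; rewrite /series /= big_mkord.
have term_le i : `|gamma ^+ i * r i| <= geometric M gamma i.
  by rewrite normrM normrX ger0_norm // mulrC ler_wpM2r ?exprn_ge0.
apply: (@normed_cvg _ R^o); apply: (series_le_cvg _ _ term_le).
- by move=> i; exact: normr_ge0.
- by move=> i; exact: le_trans (normr_ge0 _) (term_le i).
- by apply: is_cvg_geometric_series; rewrite ger0_norm.
Qed.

Lemma discounted_cvg0 (c : R^nat) K : (forall i, `|c i| <= K) ->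
  (fun n => gamma ^+ n * c n) @ \oo --> 0.
Proof.
move=> cK; have geo0 : geometric K gamma n @[n --> \oo] --> 0.
  by apply: cvg_geometric; rewrite ger0_norm.
apply: (@squeeze_cvgr _ _ _ _ (fun n => - geometric K gamma n) (geometric K gamma)).
- apply: nearW => n; rewrite -ler_norml normrM normrX ger0_norm // mulrC.
  by rewrite ler_wpM2r ?exprn_ge0.
- by rewrite -oppr0; exact: cvgN.
- exact: geo0.
Qed.

Lemma discounted_sum_telescope (r c : R^nat) n :
  \sum_(i < n) gamma ^+ i * r i + gamma ^+ n * c n =
  c 0%N + \sum_(i < n) gamma ^+ i * (r i + gamma * c i.+1 - c i).
Proof.
elim: n => [|n IH]; first by rewrite !big_ord0 expr0 mul1r add0r addr0.
by rewrite !big_ord_recr /= addrA -IH exprSr; ring.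
Qed.

Section Bounds.
Variables (r c : R^nat) (M K : R).
Hypotheses (rM : forall i, `|r i| <= M) (cK : forall i, `|c i| <= K).
Local Notation P := (fun n => \sum_(i < n) gamma ^+ i * r i).

Let shifted_sum_cvg :
  (fun n => P n + gamma ^+ n * c n) @ \oo --> limn P.
Proof.
rewrite -[X in _ --> X]addr0; apply: cvgD; last exact: discounted_cvg0 cK.
exact: discounted_sum_cvg rM.
Qed.

Lemma discounted_sum_le : (forall i, r i + gamma * c i.+1 <= c i) -> limn P <= c 0%N.
Proof.
move=> rc; rewrite -(cvg_lim _ shifted_sum_cvg) //.
apply: limr_le; first by apply/cvg_ex; exists (limn P); exact: shifted_sum_cvg.
apply: nearW => n; rewrite discounted_sum_telescope gerDl.
apply: sumr_le0 => i _; apply: mulr_ge0_le0; first exact: exprn_ge0.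
by rewrite subr_le0.
Qed.

Lemma discounted_sum_ge : (forall i, c i <= r i + gamma * c i.+1) -> c 0%N <= limn P.
Proof.
move=> rc; rewrite -(cvg_lim _ shifted_sum_cvg) //.
apply: limr_ge; first by apply/cvg_ex; exists (limn P); exact: shifted_sum_cvg.
apply: nearW => n; rewrite discounted_sum_telescope lerDl.
by apply: sumr_ge0 => i _; rewrite mulr_ge0 ?exprn_ge0 // subr_ge0.
Qed.
End Bounds.
End DiscountedSum.

Lemma norm_le_sum_norm (R : realType) (T : finType) (f : T -> R) x :
  `|f x| <= \sum_y `|f y|.
Proof. by rewrite (bigD1 x) //= lerDl sumr_ge0. Qed.

Section Returns.
Variables (R : realType) (S A : finType) (en : S -> {set A}) (Delta : S -> A -> {set S}).
Variables (gamma : R) (g : S -> A -> R).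
Hypotheses (gamma_ge0 : 0 <= gamma) (gamma_lt1 : gamma < 1).

Let M := \sum_(p : S * A) `|g p.1 p.2|.
Let g_bound s a : `|g s a| <= M.
Proof. exact: (norm_le_sum_norm (fun p : S * A => g p.1 p.2) (s, a)). Qed.

Lemma disc_return_le (h : S -> A -> R) s a :
  (forall i, g (s i) (a i) + gamma * h (s i.+1) (a i.+1) <= h (s i) (a i)) ->
  disc_return gamma g s a <= h (s 0%N) (a 0%N).
Proof.
apply: (discounted_sum_le gamma_ge0 gamma_lt1 (fun i => g_bound (s i) (a i))
  (c := fun i => h (s i) (a i))) => i.
exact: (norm_le_sum_norm (fun p : S * A => h p.1 p.2) (s i, a i)).
Qed.

Lemma disc_return_ge (h : S -> A -> R) s a :
  (forall i, h (s i) (a i) <= g (s i) (a i) + gamma * h (s i.+1) (a i.+1)) ->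
  h (s 0%N) (a 0%N) <= disc_return gamma g s a.
Proof.
apply: (discounted_sum_ge gamma_ge0 gamma_lt1 (fun i => g_bound (s i) (a i))
  (c := fun i => h (s i) (a i))) => i.
exact: (norm_le_sum_norm (fun p : S * A => h p.1 p.2) (s i, a i)).
Qed.

Lemma q_returns_has_lbound pi s0 a0 : has_lbound (q_returns en Delta gamma g pi s0 a0).
Proof.
exists (- (M / (1 - gamma))) => _ [s [a [_ _ _ _ ->]]].
apply: (disc_return_ge (h := fun _ _ => - (M / (1 - gamma)))) => i.
have BM : M / (1 - gamma) - gamma * (M / (1 - gamma)) = M.
  by rewrite -[X in X - _]mul1r -mulrBl mulrC divfK // subr_eq0 gt_eqF.
have := g_bound (s i) (a i); rewrite ler_norml => /andP[gM _].
lra.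
Qed.

Lemma v_returns_q_returns pi s0 :
  v_returns en Delta gamma g pi s0 = q_returns en Delta gamma g pi s0 (pi s0).
Proof.
apply/seteqP; split => r.
- by move=> [s [a [run s_0 follow ->]]]; exists s, a; split; rewrite ?follow ?s_0.
- move=> [s [a [run s_0 a_0 follow ->]]]; exists s, a; split => // -[|i]; last exact: follow.
  by rewrite a_0 s_0.
Qed.

Lemma vmax_qmax pi s : vmax en Delta gamma g pi s = qmax en Delta gamma g pi s (pi s).
Proof. by rewrite /vmax v_returns_q_returns. Qed.

Lemma vmin_qmin pi s : vmin en Delta gamma g pi s = qmin en Delta gamma g pi s (pi s).
Proof. by rewrite /vmin v_returns_q_returns. Qed.
End Returns.

(* Completeness and the normed-module structure of real matrices are declared
   separately in the library; this joins them, so that Banach's fixed point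
   theorem applies to ['rV[R]_n] with its sup norm. *)
HB.instance Definition _ (R : realType) (m n : nat) := Complete.on 'M[R]_(m, n).

Lemma sup_norm_contraction_fixed_point (R : realType) (S : finType)
    (T : (S -> R) -> S -> R) (q : R) : 0 <= q -> q < 1 ->
  (forall V U e, (forall s, `|V s - U s| <= e) -> forall s, `|T V s - T U s| <= q * e) ->
  exists V, T V = V.
Proof.
move=> q_ge0 q_lt1 T_lip.
pose vec (V : S -> R) : 'rV[R]_#|S| := \row_i V (enum_val i).
pose fn (v : 'rV[R]_#|S|) : S -> R := fun s => v ord0 (enum_rank s).
pose f (v : 'rV[R]_#|S|) := vec (T (fn v)).
have fnK V : fn (vec V) = V by apply/funext => s; rewrite /fn mxE enum_rankK.
have entry_le (v : 'rV[R]_#|S|) i : `|v ord0 i| <= `|v|.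
  by rewrite [leRHS]/Num.norm /= mx_normrE (le_bigmax _ (fun ij => `|v ij.1 ij.2|) (ord0, i)).
have norm_le (v : 'rV[R]_#|S|) e : 0 <= e -> (forall i, `|v ord0 i| <= e) -> `|v| <= e.
  move=> e_ge0 ve; rewrite [leLHS]/Num.norm /= mx_normrE; apply: bigmax_le => // -[i j] _.
  by rewrite [i]ord1.
have [|||v _ v_fix] := @banach_fixed_point R 'rV[R]_#|S| setT (totalfun_ setT f).
- exists (NngNum q_ge0); split => // -[v w] _ /=.
  apply: norm_le => [|i]; first by rewrite mulr_ge0.
  rewrite !mxE; apply: T_lip => s.
  by have := entry_le (v - w) (enum_rank s); rewrite !mxE.
- exact: closedT.
- by exists 0.
by exists (fn v); rewrite {2}v_fix /= fnK.
Qed.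

Lemma dist_maxima_le (R : realType) (T : finType) (D : {pred T}) (f h : T -> R) x y e :
  x \in D -> y \in D -> (forall z, z \in D -> f z <= f x) ->
  (forall z, z \in D -> h z <= h y) -> (forall z, z \in D -> `|f z - h z| <= e) ->
  `|f x - h y| <= e.
Proof.
move=> Dx Dy fx hy fh; have := fh x Dx; have := fh y Dy.
rewrite !ler_distl => /andP[fy_lo _] /andP[_ fx_hi].
have := fx y Dy; have := hy x Dx; lra.
Qed.

Section ExtremalChoices.
Variables (R : realType) (S A : finType) (en : S -> {set A}) (Delta : S -> A -> {set S}).
Hypothesis en_neq0 : forall s, en s != finset.set0.
Hypothesis Delta_neq0 : forall s a, a \in en s -> Delta s a != finset.set0.

Lemma greedy_is_policy (q : S -> A -> R) pi : greedy en q pi -> is_policy en pi.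
Proof. by move=> q_pi s; case: (q_pi s). Qed.

Lemma eq_greedy (q q' : S -> A -> R) pi :
  (forall s a, a \in en s -> q s a = q' s a) -> greedy en q pi -> greedy en q' pi.
Proof.
move=> qq' q_pi s; have [pi_en pi_max] := q_pi s; split => // a a_en.
by rewrite -!qq' //; exact: pi_max.
Qed.

Definition greedy_policy (q : S -> A -> R) : S -> A := fun s =>
  [arg max_(a > xchoose (set0Pn _ (en_neq0 s)) in en s) q s a]%O.

Lemma greedy_policyP q : greedy en q (greedy_policy q).
Proof.
move=> s; rewrite /greedy_policy.
by case: arg_maxP => [|a a_en a_max]; [exact: xchooseP | split].
Qed.

(* The default [s] is junk, used only when [Delta s a] is empty. *)
Definition best_succ (V : S -> R) s a : S :=
  [arg max_(t > odflt s [pick t in Delta s a] in Delta s a) V t]%O.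

Lemma best_succP V s a : a \in en s ->
  best_succ V s a \in Delta s a /\ forall t, t \in Delta s a -> V t <= V (best_succ V s a).
Proof.
move=> a_en; rewrite /best_succ; case: pickP => [t0 t0_in|Delta0]; last first.
  by case/set0Pn: (Delta_neq0 a_en) => t t_in; have := Delta0 t; rewrite t_in.
by case: arg_maxP.
Qed.

Definition worst_succ (V : S -> R) : S -> A -> S := best_succ (fun t => - V t).

Lemma worst_succP V s a : a \in en s ->
  worst_succ V s a \in Delta s a /\ forall t, t \in Delta s a -> V (worst_succ V s a) <= V t.
Proof.
move=> a_en; have [in_Delta min] := best_succP (fun t => - V t) a_en.
by split => // t /min; rewrite lerN2.
Qed.

Lemma best_succ_lipschitz V U e s a : a \in en s -> (forall t, `|V t - U t| <= e) ->
  `|V (best_succ V s a) - U (best_succ U s a)| <= e.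
Proof.
move=> a_en VU; have [V_in V_max] := best_succP V a_en; have [U_in U_max] := best_succP U a_en.
exact: (dist_maxima_le V_in U_in V_max U_max).
Qed.

Lemma worst_succ_lipschitz V U e s a : a \in en s -> (forall t, `|V t - U t| <= e) ->
  `|V (worst_succ V s a) - U (worst_succ U s a)| <= e.
Proof.
move=> a_en VU; rewrite /worst_succ -normrN opprD.
apply: (best_succ_lipschitz (V := fun t => - V t) (U := fun t => - U t) a_en) => t.
by rewrite -opprD normrN.
Qed.
End ExtremalChoices.

Section Bellman.
Variables (R : realType) (S A : finType) (en : S -> {set A}) (Delta : S -> A -> {set S}).
Variables (gamma : R) (g : S -> A -> R).
Hypotheses (gamma_ge0 : 0 <= gamma) (gamma_lt1 : gamma < 1).
Hypothesis en_neq0 : forall s, en s != finset.set0.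
(* The successor picked by the nondeterminism: [best_succ] for the maximal
   return, [worst_succ] for the minimal one. *)
Variable succ : (S -> R) -> S -> A -> S.
Hypothesis succ_in : forall V s a, a \in en s -> succ V s a \in Delta s a.
Hypothesis succ_lipschitz : forall V U e s a, a \in en s ->
  (forall t, `|V t - U t| <= e) -> `|V (succ V s a) - U (succ U s a)| <= e.

Definition bellman_q (V : S -> R) s a := g s a + gamma * V (succ V s a).

Definition bellman (V : S -> R) s := bellman_q V s (greedy_policy en_neq0 (bellman_q V) s).

Lemma bellman_lipschitz V U e : (forall t, `|V t - U t| <= e) ->
  forall s, `|bellman V s - bellman U s| <= gamma * e.
Proof.
move=> VU s; have [V_en V_max] := greedy_policyP en_neq0 (bellman_q V) s.
have [U_en U_max] := greedy_policyP en_neq0 (bellman_q U) s.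
apply: (dist_maxima_le V_en U_en V_max U_max) => a a_en.
rewrite /bellman_q opprD addrACA subrr add0r -mulrBr normrM ger0_norm //.
by rewrite ler_wpM2l // succ_lipschitz.
Qed.

Lemma bellman_fixed_point : exists V, bellman V = V.
Proof. exact: sup_norm_contraction_fixed_point gamma_ge0 gamma_lt1 bellman_lipschitz. Qed.

Section Solution.
Variable V : S -> R.
Hypothesis V_fix : bellman V = V.
Local Notation Q := (bellman_q V).

Lemma bellman_q_le s a : a \in en s -> Q s a <= V s.
Proof. by move=> a_en; rewrite -{2}V_fix; exact: (greedy_policyP en_neq0 Q s).2. Qed.

Lemma greedy_bellman_q pi s : greedy en Q pi -> Q s (pi s) = V s.
Proof.
move=> Q_pi; apply/le_anti; rewrite bellman_q_le ?(Q_pi s).1 //=.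
by rewrite -{1}V_fix; exact: (Q_pi s).2 (greedy_policyP en_neq0 Q s).1.
Qed.

Lemma succ_run_return pi s0 a0 : is_policy en pi -> a0 \in en s0 ->
  exists2 r, q_returns en Delta gamma g pi s0 a0 r &
    r <= Q s0 a0 /\ (greedy en Q pi -> Q s0 a0 <= r).
Proof.
move=> pi_pol a0_en.
have [s [a [s_0 a_0 s_succ a_pi]]] : exists (s : nat -> S) (a : nat -> A),
    [/\ s 0%N = s0, a 0%N = a0, forall i, s i.+1 = succ V (s i) (a i)
       & forall i, a i.+1 = pi (s i.+1)].
  pose step (p : S * A) := let t := succ V p.1 p.2 in (t, pi t).
  by exists (fun i => (iter i step (s0, a0)).1), (fun i => (iter i step (s0, a0)).2).
have a_en i : a i \in en (s i) by case: i => [|i]; rewrite ?s_0 ?a_0 ?a_pi.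
have run : is_run en Delta s a by move=> i; rewrite s_succ succ_in.
exists (disc_return gamma g s a); first by exists s, a; split => // -[|i].
rewrite -s_0 -a_0.
split => [|Q_pi].
- apply: (disc_return_le gamma_ge0 gamma_lt1 (h := Q)) => i.
  by rewrite [leRHS]/bellman_q -s_succ lerD2l ler_wpM2l // bellman_q_le.
- apply: (disc_return_ge gamma_ge0 gamma_lt1 (h := Q)) => i.
  by rewrite [leLHS]/bellman_q -s_succ a_pi greedy_bellman_q.
Qed.

Lemma qmin_le pi s a : is_policy en pi -> a \in en s -> qmin en Delta gamma g pi s a <= Q s a.
Proof.
move=> pi_pol a_en; have [r r_ret [r_le _]] := succ_run_return pi_pol a_en.
apply: le_trans (ge_inf _ r_ret) r_le; exact: q_returns_has_lbound.
Qed.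

Section MaximalSuccessor.
Hypothesis succ_max : forall s a t, a \in en s -> t \in Delta s a -> V t <= V (succ V s a).

Lemma q_returns_le pi s0 a0 r : q_returns en Delta gamma g pi s0 a0 r -> r <= Q s0 a0.
Proof.
move=> [s [a [run <- <- _ ->]]]; apply: (disc_return_le gamma_ge0 gamma_lt1 (h := Q)) => i.
have [a_en s_in] := run i; rewrite [leRHS]/bellman_q lerD2l ler_wpM2l //.
exact: le_trans (bellman_q_le (run i.+1).1) (succ_max a_en s_in).
Qed.

Lemma qmax_le pi s a : is_policy en pi -> a \in en s -> qmax en Delta gamma g pi s a <= Q s a.
Proof.
move=> pi_pol a_en; have [r r_ret _] := succ_run_return pi_pol a_en.
by apply: ge_sup; [exists r | move=> r'; exact: q_returns_le].
Qed.

Lemma greedy_qmax pi s a : greedy en Q pi -> a \in en s ->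
  qmax en Delta gamma g pi s a = Q s a.
Proof.
move=> Q_pi a_en; have pi_pol := greedy_is_policy Q_pi.
apply/le_anti; rewrite qmax_le //=.
have [r r_ret [_ /(_ Q_pi) Q_le]] := succ_run_return pi_pol a_en.
apply: le_trans Q_le (ub_le_sup _ r_ret).
by exists (Q s a) => r'; exact: q_returns_le.
Qed.
End MaximalSuccessor.

Section MinimalSuccessor.
Hypothesis succ_min : forall s a t, a \in en s -> t \in Delta s a -> V (succ V s a) <= V t.

Lemma q_returns_ge pi s0 a0 r : greedy en Q pi ->
  q_returns en Delta gamma g pi s0 a0 r -> Q s0 a0 <= r.
Proof.
move=> Q_pi [s [a [run <- <- follow ->]]].
apply: (disc_return_ge gamma_ge0 gamma_lt1 (h := Q)) => i.
have [a_en s_in] := run i; rewrite [leLHS]/bellman_q lerD2l ler_wpM2l //.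
by rewrite (follow i.+1) // greedy_bellman_q // succ_min.
Qed.

Lemma greedy_qmin pi s a : greedy en Q pi -> a \in en s ->
  qmin en Delta gamma g pi s a = Q s a.
Proof.
move=> Q_pi a_en; have pi_pol := greedy_is_policy Q_pi.
apply/le_anti; rewrite qmin_le //=.
have [r r_ret _] := succ_run_return pi_pol a_en.
by apply: lb_le_inf; [exists r | move=> r'; exact: q_returns_ge].
Qed.
End MinimalSuccessor.
End Solution.
End Bellman.

Lemma sup_image_attained (R : realType) (T : Type) (P : set T) (f : T -> R) x c :
  P x -> f x = c -> (forall y, P y -> f y <= c) -> sup [set f y | y in P] = c.
Proof.
move=> Px fx f_le; apply/le_anti/andP; split.
- by apply: ge_sup; [exists (f x), x | move=> _ [y Py <-]; exact: f_le].
- rewrite -fx; apply: ub_le_sup; last by exists x.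
  by exists c => _ [y Py <-]; exact: f_le.
Qed.

Section GreedyOptimality.
Variables (R : realType) (S A : finType) (en : S -> {set A}) (Q : S -> A -> R).
Variables (qv : (S -> A) -> S -> A -> R) (vv : (S -> A) -> S -> R).
Hypothesis qv_le : forall pi s a, is_policy en pi -> a \in en s -> qv pi s a <= Q s a.
Hypothesis greedy_qv : forall pi s a, greedy en Q pi -> a \in en s -> qv pi s a = Q s a.
Hypothesis vv_qv : forall pi s, vv pi s = qv pi s (pi s).
Variable pi0 : S -> A.
Hypothesis pi0_greedy : greedy en Q pi0.

Lemma greedy_value pi s : greedy en Q pi -> vv pi s = Q s (pi0 s).
Proof.
move=> Q_pi; have [pi_en pi_max] := Q_pi s; have [pi0_en pi0_max] := pi0_greedy s.
by rewrite vv_qv greedy_qv //; apply/le_anti; rewrite pi_max ?pi0_max.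
Qed.

Lemma optimal_value s : sup [set vv pi s | pi in is_policy en] = Q s (pi0 s).
Proof.
apply: sup_image_attained (greedy_is_policy pi0_greedy) (greedy_value s pi0_greedy) _.
move=> pi pi_pol; rewrite vv_qv; apply: le_trans (qv_le pi_pol (pi_pol s)) _.
exact: (pi0_greedy s).2.
Qed.

Lemma optimal_q_value s a : a \in en s ->
  sup [set qv pi s a | pi in is_policy en] = Q s a.
Proof.
move=> a_en; apply: (sup_image_attained (greedy_is_policy pi0_greedy)).
- exact: greedy_qv pi0_greedy a_en.
- by move=> pi pi_pol; exact: qv_le.
Qed.

Lemma greedy_optimal pi : greedy en Q pi ->
  forall s, vv pi s = sup [set vv pi' s | pi' in is_policy en].
Proof. by move=> Q_pi s; rewrite optimal_value greedy_value. Qed.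

Lemma greedy_optimal_q_optimal pi :
  greedy en (fun s a => sup [set qv pi' s a | pi' in is_policy en]) pi ->
  forall s, vv pi s = sup [set vv pi' s | pi' in is_policy en].
Proof.
move=> q_pi; apply: greedy_optimal; apply: eq_greedy q_pi => s a.
exact: optimal_q_value.
Qed.
End GreedyOptimality.

Section Optimality.
Variables (R : realType) (S A : finType) (en : S -> {set A}) (Delta : S -> A -> {set S}).
Variables (gamma : R) (g : S -> A -> R).
Hypotheses (gamma_ge0 : 0 <= gamma) (gamma_lt1 : gamma < 1).
Hypothesis en_neq0 : forall s, en s != finset.set0.
Hypothesis Delta_neq0 : forall s a, a \in en s -> Delta s a != finset.set0.

Lemma max_optimal_policies :
  (exists pi, is_policy en pi /\ max_optimal en Delta gamma g pi) /\
  (forall pi, greedy en (qmax_star en Delta gamma g) pi -> max_optimal en Delta gamma g pi).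
Proof.
have [V V_fix] :=
  bellman_fixed_point g gamma_ge0 gamma_lt1 en_neq0 (best_succ_lipschitz Delta_neq0).
have best_in (W : S -> R) s a (a_en : a \in en s) := (best_succP Delta_neq0 W a_en).1.
have best_max s a t (a_en : a \in en s) := (best_succP Delta_neq0 V a_en).2 t.
have qmax_le := qmax_le gamma_ge0 gamma_lt1 best_in V_fix best_max.
have greedy_qmax := greedy_qmax gamma_ge0 gamma_lt1 best_in V_fix best_max.
have pi0_greedy := greedy_policyP en_neq0 (bellman_q gamma g (best_succ Delta) V).
have v_q := @vmax_qmax _ _ _ en Delta gamma g.
split => [|pi q_pi s].
- exists (greedy_policy en_neq0 (bellman_q gamma g (best_succ Delta) V)).
  split => [|s]; first exact: greedy_is_policy pi0_greedy.
  exact (greedy_optimal qmax_le greedy_qmax v_q pi0_greedy pi0_greedy s).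
- exact (greedy_optimal_q_optimal qmax_le greedy_qmax v_q pi0_greedy q_pi s).
Qed.

Lemma min_optimal_policies :
  (exists pi, is_policy en pi /\ min_optimal en Delta gamma g pi) /\
  (forall pi, greedy en (qmin_star en Delta gamma g) pi -> min_optimal en Delta gamma g pi).
Proof.
have [V V_fix] :=
  bellman_fixed_point g gamma_ge0 gamma_lt1 en_neq0 (worst_succ_lipschitz Delta_neq0).
have worst_in (W : S -> R) s a (a_en : a \in en s) := (worst_succP Delta_neq0 W a_en).1.
have worst_min s a t (a_en : a \in en s) := (worst_succP Delta_neq0 V a_en).2 t.
have qmin_le := qmin_le gamma_ge0 gamma_lt1 worst_in V_fix.
have greedy_qmin := greedy_qmin gamma_ge0 gamma_lt1 worst_in V_fix worst_min.
have pi0_greedy := greedy_policyP en_neq0 (bellman_q gamma g (worst_succ Delta) V).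
have v_q := @vmin_qmin _ _ _ en Delta gamma g.
split => [|pi q_pi s].
- exists (greedy_policy en_neq0 (bellman_q gamma g (worst_succ Delta) V)).
  split => [|s]; first exact: greedy_is_policy pi0_greedy.
  exact (greedy_optimal qmin_le greedy_qmin v_q pi0_greedy pi0_greedy s).
- exact (greedy_optimal_q_optimal qmin_le greedy_qmin v_q pi0_greedy q_pi s).
Qed.
End Optimality.

Theorem corollary2 (R : realType) (S A : finType)
  (en : S -> {set A}) (Delta : S -> A -> {set S}) (gb gu : S -> A -> R) (gamma : R) :
  0 < gamma < 1 ->
  (forall s, en s != finset.set0) ->
  (forall s a, a \in en s -> Delta s a != finset.set0) ->
  [/\ (exists pi, is_policy en pi /\ max_optimal en Delta gamma gb pi),
      (exists pi, is_policy en pi /\ min_optimal en Delta gamma gu pi),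
      (forall pi, greedy en (qmax_star en Delta gamma gb) pi ->
         max_optimal en Delta gamma gb pi) &
      (forall pi, greedy en (qmin_star en Delta gamma gu) pi ->
         min_optimal en Delta gamma gu pi)].
Proof.
move=> /andP[/ltW gamma_ge0 gamma_lt1] en_neq0 Delta_neq0.
have [max_exists max_greedy] := max_optimal_policies gb gamma_ge0 gamma_lt1 en_neq0 Delta_neq0.
have [min_exists min_greedy] := min_optimal_policies gu gamma_ge0 gamma_lt1 en_neq0 Delta_neq0.
by split.
Qed.
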